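(* For every integer $k\ge1$ let $a_k=(a_k(n))_{n\ge0}$ and $b_k=(b_k(n))_{n\ge0}$ be given by $a_k(n)=A_{n+k-1,k}$ and $b_k(n)=B_{n+k,k}$. Then: (i) $a_k,b_k\in\ell^1(\mathbb{N}^0,\frac{1}{4^n})$ with $\|a_k\|_{1,\frac1{4^n}}=2^{2k-1}$ and $\|b_k\|_{1,\frac1{4^n}}=2^{2k}$; (ii) $Z(a_k)(z)=(C(z))^{2k-1}$ and $Z(b_k)(z)=(C(z))^{2k}$ for $|z|<\frac14$; (iii) $a_k$ equals the convolution product of $2k-1$ copies of $c$, and $b_k$ equals the convolution product of $2k$ copies of $c$ (in the paper's notation, $a_k=c^{\ast(2k-2)}$ and $b_k=c^{\ast(2k-1)}$).
   Context: $C_n=\frac{1}{n+1}\binom{2n}{n}$ are the Catalan numbers, $c=(C_n)_{n\ge0}$, and $C(z)=\sum_{n\ge0}C_nz^n=\frac{1-\sqrt{1-4z}}{2z}$ for $|z|<\frac14$. The Catalan triangle numbers are $B_{n,k}=\frac{k}{n}\binom{2n}{n-k}$ ($n\ge1$, $1\le k\le n$) and $A_{n,k}=\frac{2k-1}{2n+1}\binom{2n+1}{n+1-k}$ ($n\ge0$, $1\le k\le n+1$). $\ell^1(\mathbb{N}^0,\frac1{4^n})$ is the Banach algebra of complex sequences $a=(a(n))_{n\ge0}$ with $\|a\|_{1,\frac1{4^n}}=\sum_{n\ge0}|a(n)|/4^n<\infty$, with convolution product $(a\ast b)(n)=\sum_{j=0}^n a(n-j)b(j)$. The paper's convention for convolution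 powers is $a^{\ast0}=a$, $a^{\ast n}=a^{\ast(n-1)}\ast a$, so $a^{\ast m}$ is the product of $m+1$ copies of $a$. $Z(a)(z)=\sum_{n\ge0}a(n)z^n$ is the $Z$-transform. *)

From HB Require Import structures.
From mathcomp Require Import all_boot all_order all_algebra.
From mathcomp Require Import all_classical all_reals all_analysis.
From mathcomp Require Export complex.
Export Order.TTheory GRing.Theory Num.Theory.
Export numFieldTopology.Exports numFieldNormedType.Exports.

Set Implicit Arguments.
Unset Strict Implicit.
Unset Printing Implicit Defensive.

Local Open Scope ring_scope.
Local Open Scope classical_set_scope.

(* Give R[i] its usual (norm) topology / normed-module structure. *)
HB.instance Definition _ (R : rcfType) := NormedModule.copy R[i] (R[i])^o.

Section Defs.
Variable R : realType.

Definition catalan (n : nat) : R := 'C(n.*2, n)%:R / n.+1%:R.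

Definition catB (n k : nat) : R := (k%:R / n%:R) * 'C(n.*2, n - k)%:R.
Definition catA (n k : nat) : R :=
  ((k.*2.-1)%:R / (n.*2.+1)%:R) * 'C(n.*2.+1, n.+1 - k)%:R.

Definition a_k (k : nat) : nat -> R := fun n => catA (n + k).-1 k.
Definition b_k (k : nat) : nat -> R := fun n => catB (n + k) k.

Definition weighted_abs (a : nat -> R) : nat -> R := fun n => `|a n| / 4%:R ^+ n.
Definition in_l1_4 (a : nat -> R) : Prop := cvgn (series (weighted_abs a)).
Definition norm_l1_4 (a : nat -> R) : R := limn (series (weighted_abs a)).

(* Convolution product and the paper's convolution powers:
   cpow a 0 = a, cpow a m = cpow a (m-1) * a  (m+1 factors) *)
Definition conv (a b : nat -> R) : nat -> R :=
  fun n => \sum_(j < n.+1) a (n - j)%N * b j.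
Fixpoint cpow (a : nat -> R) (m : nat) : nat -> R :=
  match m with
  | 0 => a
  | m'.+1 => conv (cpow a m') a
  end.

Definition Zpartial (a : nat -> R) (z : R[i]) : nat -> R[i] :=
  series (fun n => (a n)%:C%C * z ^+ n).

Definition catGF (z : R[i]) : R[i] :=
  if z == 0 then 1 else (1 - sqrtc (1 - 4%:R * z)) / (2%:R * z).

End Defs.

From Pilot Require Import Defs.
From HB Require Import structures.
From mathcomp Require Import all_boot all_order all_algebra.
From mathcomp Require Import all_classical all_reals all_analysis.
From mathcomp Require Import complex.
From mathcomp Require Import zify ring lra.
Import Order.TTheory GRing.Theory Num.Theory.
Import numFieldTopology.Exports numFieldNormedType.Exports.
Local Open Scope ring_scope.
Local Open Scope classical_set_scope.

(* Write [ballot m n] for the coefficient of z^n in C(z)^m.  Multiplying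
   C = 1 + z C^2 by C^m gives ballot (m+1) (n+1) = ballot m (n+1) + ballot (m+2) n,
   whence the closed form ballot m n = m/(2n+m) binom(2n+m, n) and the
   convolution identity ballot m * ballot r = ballot (m + r).  So a_k and b_k
   are ballot (2k-1) and ballot (2k), which is (iii).
   For (i) and (ii), the same identity shows that for any X = 1 + x X^2 the
   error X^m - sum_(n < N) ballot m n x^n is x times the sum over i < m of the
   errors of order N-1 for the exponents i+2.  When |x| <= 1/4 and |X| <= 2 it
   is thus dominated by the error at x = 1/4, X = 2.  That error tends to 0:
   for m = 1 it is 2 binom(2N,N)/4^N = O(1/sqrt N), and the recursion in m
   propagates this to every m. *)

Fixpoint ballot_rec (n : nat) : nat -> nat :=
  match n with
  | 0 => fun=> 1%N
  | n'.+1 => fix ballot_n m :=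
      if m is m'.+1 then (ballot_n m' + ballot_rec n' m'.+2)%N else 0%N
  end.
Definition ballot m n := ballot_rec n m.

Lemma ballot_m0 m : ballot m 0 = 1%N. Proof. by []. Qed.
Lemma ballot0S n : ballot 0 n.+1 = 0%N. Proof. by []. Qed.
Lemma ballotSS m n : ballot m.+1 n.+1 = (ballot m n.+1 + ballot m.+2 n)%N.
Proof. by []. Qed.
Arguments ballot : simpl never.

Lemma ballotS_bin m n :
  (ballot m n.+1 + 'C(n.*2 + m.+1, n))%N = 'C(n.*2 + m.+1, n.+1).
Proof.
elim: n m => [|n IHn] m.
  elim: m => [|m IHm]; first by rewrite ballot0S.
  by rewrite ballotSS ballot_m0 !bin0 !bin1 in IHm *; lia.
elim: m => [|m IHm].
  rewrite ballot0S add0n -(@bin_sub ((n.+1).*2 + 1) n.+1); last by lia.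
  by congr 'C(_, _); lia.
have -> : ((n.+1).*2 + m.+2 = (n.*2 + m.+3).+1)%N by lia.
rewrite (_ : (n.+1).*2 + m.+1 = n.*2 + m.+3)%N in IHm; last by lia.
rewrite ballotSS !binS; have := IHn m.+2; lia.
Qed.

Lemma ballot_bin m n :
  (0 < m)%N -> ((n.*2 + m) * ballot m n = m * 'C(n.*2 + m, n))%N.
Proof.
move=> m_gt0; case: n => [|n]; first by rewrite ballot_m0 bin0; lia.
have := ballotS_bin m n; set N := (n.*2 + m.+1)%N => ballot_eq.
have -> : ((n.+1).*2 + m = N.+1)%N by rewrite /N; lia.
have := mul_bin_diag N.+1 n; have := mul_bin_down N.+1 n.+1.
have -> : (N.+1 - n.+1 = n + m.+1)%N by rewrite /N; lia.
rewrite /=; nia.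
Qed.

Lemma ballot_conv m r n :
  (\sum_(j < n.+1) ballot m (n - j) * ballot r j)%N = ballot (m + r) n.
Proof.
elim: n m r => [|n IHn] m r; first by rewrite big_ord1 !ballot_m0.
elim: r => [|r IHr].
  rewrite big_ord_recl ballot_m0 muln1 addn0 big1 ?addn0 // => j _.
  by rewrite lift0 ballot0S muln0.
have {}IHr : (ballot m n.+1 + \sum_(j < n.+1) ballot m (n - j) * ballot r j.+1)%N
    = ballot (m + r) n.+1.
  by rewrite -IHr [RHS]big_ord_recl subn0 ballot_m0 muln1.
rewrite big_ord_recl subn0 ballot_m0 muln1.
under eq_bigr => j _ do rewrite lift0 subSS ballotSS mulnDr.
by rewrite big_split /= IHn addnA IHr !addnS ballotSS.
Qed.

Lemma ballot1 n : (n.+1 * ballot 1 n)%N = 'C(n.*2, n).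
Proof.
apply/eqP; rewrite -(@eqn_pmul2l n.*2.+1) //.
have := ballot_bin 1 n isT; have := mul_bin_down n.*2.+1 n.
rewrite addn1 /= (_ : n.*2.+1 - n = n.+1)%N; last by lia.
move=> h1 h2; apply/eqP; nia.
Qed.

Lemma ballot_ratio (F : numFieldType) m n : (0 < m)%N ->
  (ballot m n)%:R = m%:R / (n.*2 + m)%:R * 'C(n.*2 + m, n)%:R :> F.
Proof.
move=> m_gt0; have := ballot_bin m n m_gt0 => /(congr1 (GRing.natmul (1 : F))).
rewrite !natrM => eq_ballot.
have nz : (n.*2 + m)%:R != 0 :> F by rewrite pnatr_eq0; lia.
by apply: (mulfI nz); rewrite eq_ballot; field; rewrite -natrD.
Qed.

Section CatalanSequences.
Variable R : realType.

Lemma catalan_ballot n : catalan R n = (ballot 1 n)%:R.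
Proof. by rewrite /catalan -ballot1 natrM [X in X / _]mulrC mulfK // pnatr_eq0. Qed.

Lemma cpow_catalan j : cpow (catalan R) j = fun n => (ballot j.+1 n)%:R.
Proof.
elim: j => [|j IHj] /=; first by apply/funext => n; rewrite catalan_ballot.
apply/funext => n; rewrite /Defs.conv IHj.
under eq_bigr => i _ do rewrite catalan_ballot -natrM.
by rewrite -natr_sum ballot_conv addn1.
Qed.

Lemma a_k_ballot k : (0 < k)%N -> a_k R k = fun n => (ballot k.*2.-1 n)%:R.
Proof.
move=> k_gt0; apply/funext => n; rewrite ballot_ratio /a_k /Defs.catA; last by lia.
have -> : (((n + k).-1).*2.+1 = n.*2 + k.*2.-1)%N by lia.
by have -> : ((n + k).-1.+1 - k = n)%N by lia.
Qed.

Lemma b_k_ballot k : (0 < k)%N -> b_k R k = fun n => (ballot k.*2 n)%:R.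
Proof.
move=> k_gt0; apply/funext => n; rewrite ballot_ratio /b_k /Defs.catB; last by lia.
rewrite -doubleD addnK -!muln2 !natrM.
have nz : (n + k)%:R != 0 :> R by rewrite pnatr_eq0; lia.
by field; rewrite -natrD.
Qed.

End CatalanSequences.

Section BallotPartialSums.
Variable V : comNzRingType.
Implicit Types x X : V.

Definition ballot_psum x m N := \sum_(n < N) (ballot m n)%:R * x ^+ n.

Lemma ballot_psum0 x m : ballot_psum x m 0 = 0.
Proof. exact: big_ord0. Qed.

Lemma ballot_psum_0S x N : ballot_psum x 0 N.+1 = 1.
Proof.
rewrite /ballot_psum big_ord_recl ballot_m0 mulr1 big1 ?addr0 // => i _.
by rewrite lift0 ballot0S mul0r.
Qed.

Lemma ballot_psumSS x m N :
  ballot_psum x m.+1 N.+1 = ballot_psum x m N.+1 + x * ballot_psum x m.+2 N.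
Proof.
rewrite /ballot_psum !big_ord_recl !ballot_m0 mulr_sumr -addrA; congr (_ + _).
rewrite -big_split; apply: eq_bigr => i _.
by rewrite lift0 ballotSS natrD exprS /=; ring.
Qed.

Lemma ballot_psum_telescope x m N :
  ballot_psum x m N.+1 = 1 + x * \sum_(i < m) ballot_psum x i.+2 N.
Proof.
elim: m => [|m IHm]; first by rewrite ballot_psum_0S big_ord0 mulr0 addr0.
by rewrite ballot_psumSS IHm big_ord_recr mulrDr addrA.
Qed.

Section FixedPoint.
Variables x X : V.
Hypothesis X_eq : X = 1 + x * X ^+ 2.

Lemma expr_telescope m : X ^+ m = 1 + x * \sum_(i < m) X ^+ i.+2.
Proof.
elim: m => [|m IHm]; first by rewrite big_ord0 mulr0 addr0.
rewrite big_ord_recr mulrDr addrA -IHm exprS {1}X_eq /= !exprS; ring.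
Qed.

Lemma ballot_psum_errS m N : X ^+ m - ballot_psum x m N.+1 =
  x * \sum_(i < m) (X ^+ i.+2 - ballot_psum x i.+2 N).
Proof. by rewrite ballot_psum_telescope expr_telescope sumrB; ring. Qed.

End FixedPoint.
End BallotPartialSums.
Arguments ballot_psum {V}.

Lemma ballot_psum_err_le (F : numFieldType) (x X : F) m N :
  X = 1 + x * X ^+ 2 -> `|x| <= 4%:R^-1 -> `|X| <= 2%:R ->
  `|X ^+ m - ballot_psum x m N| <= 2%:R ^+ m - ballot_psum 4%:R^-1 m N.
Proof.
move=> X_eq x_le X_le.
have two_eq : 2%:R = 1 + 4%:R^-1 * 2%:R ^+ 2 :> F by field.
elim: N m => [|N IHN] m.
  by rewrite !ballot_psum0 !subr0 normrX lerXn2r // nnegrE.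
rewrite ballot_psum_errS // (ballot_psum_errS _ _ _ two_eq) normrM.
apply: ler_pM => //; rewrite ?normr_ge0 //.
apply: le_trans (ler_norm_sum _ _ _) _.
by apply: ler_sum => i _; exact: IHN.
Qed.

Lemma mul_central_binS N :
  (N.+1 * 'C(N.+1.*2, N.+1) = 2 * N.*2.+1 * 'C(N.*2, N))%N.
Proof.
have := mul_bin_diag N.+1.*2 N; have := mul_bin_down N.*2.+1 N.
have -> : (N.+1.*2.-1 = N.*2.+1)%N by lia.
have -> : (N.*2.+1 - N = N.+1)%N by lia.
by move=> /= h1 <-; rewrite -mulnA h1 -muln2 -mulnA mulnCA.
Qed.

Section CentralBinomialQuarter.
Variable F : realFieldType.

Definition cbin_div4 N : F := 'C(N.*2, N)%:R / 4%:R ^+ N.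

Lemma cbin_div4_ge0 N : 0 <= cbin_div4 N.
Proof. by rewrite divr_ge0 // exprn_ge0. Qed.

Lemma cbin_div4_0 : cbin_div4 0 = 1.
Proof. by rewrite /cbin_div4 bin0 expr0 divr1. Qed.

Lemma cbin_div4S N : cbin_div4 N.+1 * N.+1.*2%:R = cbin_div4 N * N.*2.+1%:R.
Proof.
have := mul_central_binS N => /(congr1 (GRing.natmul (1 : F))).
rewrite !natrM /cbin_div4 => eq_c.
have -> : 'C(N.+1.*2, N.+1)%:R = 2 * N.*2.+1%:R * 'C(N.*2, N)%:R / N.+1%:R :> F.
  by rewrite -eq_c [RHS]mulrC mulKf // pnatr_eq0.
rewrite exprS -[N.+1.*2]muln2 natrM; field.
by rewrite nat1r pnatr_eq0 expf_neq0 // pnatr_eq0.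
Qed.

Lemma cbin_div4_sqr_le N : cbin_div4 N ^+ 2 * N.*2.+1%:R <= 1.
Proof.
elim: N => [|N IHN]; first by rewrite cbin_div4_0 expr1n mul1r.
have := cbin_div4S N; move: IHN.
set a := cbin_div4 N; set b := cbin_div4 N.+1; set p : F := N.*2.+1%:R.
have p_ge0 : 0 <= p by [].
have -> : N.+1.*2%:R = p + 1 :> F by rewrite doubleS -natr1.
have -> : N.+1.*2.+1%:R = p + 2 :> F by rewrite doubleS -2!natr1 -addrA.
move=> a_sqr ba_eq.
rewrite -(@ler_pM2r _ ((p + 1) ^+ 2)) ?mul1r; last by apply: exprn_gt0; lra.
have -> : b ^+ 2 * (p + 2) * (p + 1) ^+ 2 = a ^+ 2 * p * (p * (p + 2)).
  by rewrite mulrAC -exprMn ba_eq; ring.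
have pp_ge0 : 0 <= p * (p + 2) by rewrite mulr_ge0 //; lra.
apply: le_trans (ler_wpM2r pp_ge0 a_sqr) _.
by rewrite mul1r; nra.
Qed.

Lemma ballot_psum1_quarter N : ballot_psum (4%:R^-1 : F) 1 N = 2 - 2 * cbin_div4 N.
Proof.
elim: N => [|N IHN]; first by rewrite ballot_psum0 cbin_div4_0 mulr1 subrr.
rewrite /ballot_psum big_ord_recr /= -/(ballot_psum _ 1 N) IHN.
have -> : (ballot 1 N)%:R = 'C(N.*2, N)%:R / N.+1%:R :> F.
  by rewrite -ballot1 natrM [X in X / _]mulrC mulfK // pnatr_eq0.
have -> : cbin_div4 N.+1 = cbin_div4 N * N.*2.+1%:R / N.+1.*2%:R.
  by rewrite -cbin_div4S mulfK // pnatr_eq0.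
rewrite /cbin_div4 exprVn -!muln2 !natrM; field.
by rewrite nat1r pnatr_eq0 expf_neq0 // pnatr_eq0.
Qed.

End CentralBinomialQuarter.
Arguments cbin_div4 {F}.

Lemma cbin_div4_cvg0 (R : realType) : cbin_div4 @ \oo --> (0 : R).
Proof.
apply/cvgrPdist_le => e e_gt0; near=> N.
rewrite sub0r normrN ger0_norm ?cbin_div4_ge0 //.
have e2_gt0 : 0 < e ^+ 2 by rewrite exprn_gt0.
have : (e ^+ 2)^-1 < N%:R by near: N; exact: nbhs_infty_gtr.
rewrite -[(e ^+ 2)^-1]mulr1 ltr_pdivrMl // => eN.
have := cbin_div4_sqr_le R N; rewrite -muln2 -natr1 natrM.
have := cbin_div4_ge0 R N; set u := cbin_div4 N => u_ge0 u_sqr.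
rewrite -(@ler_pXn2r _ 2) ?nnegrE //; last exact: ltW.
nra.
Unshelve. all: by end_near. Qed.

Lemma ballot_psum_quarter_cvg (R : realType) m :
  ballot_psum (4%:R^-1 : R) m @ \oo --> (2%:R ^+ m : R).
Proof.
suff [] : ballot_psum (4%:R^-1 : R) m @ \oo --> (2%:R ^+ m : R)
       /\ ballot_psum (4%:R^-1 : R) m.+1 @ \oo --> (2%:R ^+ m.+1 : R) by [].
elim: m => [|m [IHm IHmS]].
  split.
    rewrite -cvg_shiftS; under eq_fun do rewrite /= ballot_psum_0S.
    exact: cvg_cst.
  have -> : ballot_psum (4%:R^-1 : R) 1 = fun N => 2 - 2 * cbin_div4 N.
    by apply/funext => N; rewrite ballot_psum1_quarter.
  have := cvgB (cvg_cst (2 : R)) (cvgMl_tmp (a := 2) (cbin_div4_cvg0 R)).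
  by rewrite mulr0 subr0 expr1; apply.
split => //.
have -> : ballot_psum (4%:R^-1 : R) m.+2 = fun N =>
    4%:R * (ballot_psum 4%:R^-1 m.+1 N.+1 - ballot_psum 4%:R^-1 m N.+1).
  by apply/funext => N; rewrite ballot_psumSS addrC addKr mulrA mulfV ?mul1r.
rewrite (_ : 2%:R ^+ m.+2 = 4%:R * (2%:R ^+ m.+1 - 2%:R ^+ m) :> R);
  last by rewrite !exprS; ring.
rewrite -cvg_shiftS in IHm; rewrite -cvg_shiftS in IHmS.
by have := cvgMl_tmp (a := 4%:R) (cvgB IHmS IHm); apply.
Qed.

Lemma norm_add1r_sqrtc_ge1 (R : rcfType) (x : R[i]) : 1 <= `|1 + sqrtc x|.
Proof.
apply: le_trans (normc_ge_Re _); rewrite -[1]/((1 : R)%:C)%C lecR.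
have : 0 <= complex.Re (sqrtc x) by case: x => a b; exact: sqrtr_ge0.
by case: (sqrtc x) => a b /= a_ge0; rewrite ger0_norm; lra.
Qed.

Lemma add1r_sqrtc_neq0 (R : rcfType) (x : R[i]) : 1 + sqrtc x != 0.
Proof.
by have := norm_add1r_sqrtc_ge1 _ x; apply: contraTneq => ->; rewrite normr0 ler10.
Qed.

Lemma factor_sqrtc_1_sub4 (R : rcfType) (z : R[i]) :
  z = (1 - sqrtc (1 - 4%:R * z)) * (1 + sqrtc (1 - 4%:R * z)) / 4%:R.
Proof. by rewrite -subr_sqr expr1n sqr_sqrtc; field. Qed.

Section CatalanGF.
Variable R : realType.
Implicit Types z : R[i].

Lemma catGF_sqrtc z : z != 0 -> catGF z = 2%:R / (1 + sqrtc (1 - 4%:R * z)).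
Proof.
move=> z_neq0; rewrite /catGF (negbTE z_neq0).
have := add1r_sqrtc_neq0 _ (1 - 4%:R * z); have := factor_sqrtc_1_sub4 _ z.
set s := sqrtc _ => z_eq s_neq0.
have s1_neq0 : 1 - s != 0 by apply: contra_neq z_neq0; rewrite z_eq => ->; rewrite !mul0r.
by rewrite z_eq; field; rewrite s_neq0 s1_neq0.
Qed.

Lemma catGF_eq z : catGF z = 1 + z * catGF z ^+ 2.
Proof.
have [->|z_neq0] := eqVneq z 0; first by rewrite /catGF eqxx mul0r addr0.
rewrite catGF_sqrtc //.
have := add1r_sqrtc_neq0 _ (1 - 4%:R * z); have := factor_sqrtc_1_sub4 _ z.
set s := sqrtc _ => z_eq s_neq0.
by rewrite [X in 1 + X * _]z_eq; field.
Qed.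

Lemma catGF_norm_le2 z : `|catGF z| <= 2%:R.
Proof.
have [->|z_neq0] := eqVneq z 0; first by rewrite /catGF eqxx normr1 ler1n.
have s_ge1 := norm_add1r_sqrtc_ge1 _ (1 - 4%:R * z).
rewrite catGF_sqrtc // normrM normfV ger0_norm ?ler0n // ler_piMr ?ler0n // invf_le1 //.
exact: lt_le_trans ltr01 s_ge1.
Qed.

End CatalanGF.

Lemma rmorph_ballot_psum (V W : comNzRingType) (f : {rmorphism V -> W}) x m N :
  f (ballot_psum x m N) = ballot_psum (f x) m N.
Proof.
by rewrite rmorph_sum; apply: eq_bigr => n _; rewrite rmorphM rmorph_nat rmorphXn.
Qed.

Lemma ballot_psum_cvg (R : realType) m (z : R[i]) :
  `|z| < 4%:R^-1 -> ballot_psum z m @ \oo --> catGF z ^+ m.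
Proof.
move=> z_lt; apply/cvgrPdist_le => e e_gt0.
have := e_gt0; rewrite ltcE => /andP[_ /= Re_gt0].
have := ballot_psum_quarter_cvg R m => /cvgrPdist_le /(_ _ Re_gt0).
apply: filterS => N err_le.
have := ballot_psum_err_le _ _ _ m N (catGF_eq _ z) (ltW z_lt) (catGF_norm_le2 _ z).
move=> /le_trans; apply.
have -> : 2%:R ^+ m - ballot_psum 4%:R^-1 m N
    = ((2%:R ^+ m - ballot_psum (4%:R^-1 : R) m N)%:C)%C.
  by rewrite rmorphB rmorphXn rmorph_ballot_psum fmorphV !rmorph_nat.
rewrite -(RRe_real (gtr0_real e_gt0)) lecR.
exact: le_trans (ler_norm _) err_le.
Qed.

Section BallotSequence.
Variables (R : realType) (m : nat).
Let ballot_seq n : R := (ballot m n)%:R.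

Lemma Zpartial_ballot (z : R[i]) : Zpartial ballot_seq z = ballot_psum z m.
Proof.
apply/funext => N; rewrite /Zpartial /series /= /ballot_psum big_mkord.
by apply: eq_bigr => n _; rewrite rmorph_nat.
Qed.

Lemma ballot_l1_4 : in_l1_4 ballot_seq /\ norm_l1_4 ballot_seq = 2%:R ^+ m.
Proof.
rewrite /in_l1_4 /norm_l1_4.
have -> : series (weighted_abs ballot_seq) = ballot_psum 4%:R^-1 m.
  apply/funext => N; rewrite /series /= /ballot_psum big_mkord.
  by apply: eq_bigr => n _; rewrite /weighted_abs normr_nat exprVn.
have cvg_2m := ballot_psum_quarter_cvg R m.
by split; [exact: cvgP cvg_2m | exact: cvg_lim cvg_2m].
Qed.

End BallotSequence.

Theorem proposition3p2 (R : realType) (k : nat) (hk : (1 <= k)%N) :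
  [/\ (in_l1_4 (a_k R k) /\ norm_l1_4 (a_k R k) = 2%:R ^+ (k.*2.-1)),
      (in_l1_4 (b_k R k) /\ norm_l1_4 (b_k R k) = 2%:R ^+ (k.*2)),
      (forall z : R[i], `|z| < 4%:R^-1 ->
          Zpartial (a_k R k) z @ \oo --> catGF z ^+ (k.*2.-1)
       /\ Zpartial (b_k R k) z @ \oo --> catGF z ^+ (k.*2)) &
      (a_k R k = cpow (catalan R) (k.*2 - 2)
       /\ b_k R k = cpow (catalan R) (k.*2.-1))].
Proof.
rewrite (a_k_ballot R k hk) (b_k_ballot R k hk) !cpow_catalan.
split; [exact: ballot_l1_4 | exact: ballot_l1_4 | | ].
- by move=> z z_lt; rewrite !Zpartial_ballot; split; apply: ballot_psum_cvg.
- have -> : ((k.*2 - 2).+1 = k.*2.-1)%N by lia.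
  by have -> : ((k.*2.-1).+1 = k.*2)%N by lia.
Qed.
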